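(* Let $\mathcal{R}$ be a set of rules on a finite set $Q$, let $X\subseteq Q$, and let $S\in\mathcal{K}(\mathcal{R})$ be a proper subset of $X$. Define $\mathcal{R}^X_S=\{(A\cap X,q): (A,q)\in\mathcal{R},\ A\cap S=\emptyset,\ q\in X\setminus A\}$. Then for $x\in X\setminus S$, the set $S\cup\{x\}$ belongs to $\mathcal{K}(\mathcal{R})$ if and only if $\mathcal{R}^X_S$ contains no rule of the form $(A,x)$.
   Context: A rule on $Q$ is a pair $(A,q)$ with $A\subseteq Q$, $q\in Q$; it accepts $Y\subseteq Q$ if $q\in Y$ implies $Y\cap A\neq\emptyset$. $\mathcal{K}(\mathcal{R})$ is the family of subsets of $Q$ accepted by all rules of $\mathcal{R}$. *)

From mathcomp Require Import all_boot.
Set Implicit Arguments. Unset Strict Implicit. Unset Printing Implicit Defensive.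

Definition rule (Q : finType) := ({set Q} * Q)%type.

Definition accepts (Q : finType) (r : rule Q) (Y : {set Q}) : bool :=
  (r.2 \in Y) ==> (Y :&: r.1 != set0).

Definition K (Q : finType) (R : {set rule Q}) : {set {set Q}} :=
  [set Y : {set Q} | [forall r in R, accepts r Y]].

Definition restr_rules (Q : finType) (R : {set rule Q}) (X S : {set Q})
  : {set rule Q} :=
  [set ((r.1 :&: X), r.2) | r in R & (r.1 :&: S == set0) && (r.2 \in X :\: r.1)].

From mathcomp Require Import all_boot.
Set Implicit Arguments. Unset Strict Implicit. Unset Printing Implicit Defensive.

(* Adding x to an accepted set S can only violate a rule (A, q) with q = x
   whose premise A misses both S and x.  Since x lies in X, these are exactly
   the rules of R that survive in R^X_S with conclusion x. *)

Definition blocks (Q : finType) (S : {set Q}) (x : Q) (r : rule Q) : bool :=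
  [&& r.2 == x, r.1 :&: S == set0 & x \notin r.1].

Lemma accepts_setU1 (Q : finType) (r : rule Q) (S : {set Q}) (x : Q) :
  accepts r S -> accepts r (x |: S) = ~~ blocks S x r.
Proof.
rewrite /accepts /blocks in_setU1 setIUl setU_eq0 (setIC _ r.1).
rewrite (setI_eq0 [set x]) disjoints1.
have [_ _|_] /= := eqVneq r.2 x; first by rewrite andbC.
by case: (r.2 \in S) => //= /negbTE ->; rewrite andbF.
Qed.

Lemma restr_rules_concl (Q : finType) (R : {set rule Q}) (X S : {set Q}) (x : Q) :
  x \in X ->
  (exists A : {set Q}, (A, x) \in restr_rules R X S) <->
  (exists2 r, r \in R & blocks S x r).
Proof.
move=> xX; split=> [[A /imsetP[r]] | [r rR /and3P[/eqP r2x rS xr]]].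
  rewrite inE /blocks => /and3P[rR rS]; rewrite inE => /andP[r_notin _] [_ ->].
  by exists r; rewrite // eqxx rS.
exists (r.1 :&: X); apply/imsetP; exists r; last by rewrite r2x.
by rewrite !inE rR rS r2x xr xX.
Qed.

Lemma setU1_in_K (Q : finType) (R : {set rule Q}) (S : {set Q}) (x : Q) :
  S \in K R -> (x |: S \in K R) = [forall r in R, ~~ blocks S x r].
Proof.
rewrite !inE => /forall_inP SK; apply: eq_forallb => r.
by case rR: (r \in R); rewrite //= accepts_setU1 ?SK.
Qed.

Theorem lemma3p2 (Q : finType) (R : {set rule Q}) (X S : {set Q}) (x : Q) :
  S \in K R -> S \proper X -> x \in X :\: S ->
  (x |: S \in K R) <-> ~ (exists A : {set Q}, (A, x) \in restr_rules R X S).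
Proof.
move=> SK _ /setDP[xX _].
rewrite setU1_in_K //; split=> [/forall_inP no_block | no_rule].
  by move=> /(restr_rules_concl R S xX)[r /no_block /negP].
apply/forall_inP => r rR; apply/negP => block.
by apply: no_rule; apply/(restr_rules_concl R S xX); exists r.
Qed.
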